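(* Let $G$ be a non-amenable group and let $H$ be an amenable normal subgroup of $G$. Then $\mathcal{T}(G/H)=\mathcal{T}(G)$.
   Context: A group $G$ admits a paradoxical decomposition if there exist positive integers $m,n$, pairwise disjoint subsets $P_1,\ldots,P_m,Q_1,\ldots,Q_n$ of $G$ and elements $g_1,\ldots,g_m,h_1,\ldots,h_n\in G$ such that $G=\bigcup_{i=1}^m P_ig_i=\bigcup_{j=1}^n Q_jh_j$; this happens if and only if $G$ is non-amenable. For a non-amenable group $G$, the Tarski number $\mathcal{T}(G)$ is the minimal value of $m+n$ over all paradoxical decompositions of $G$. *)

From Stdlib Require Import Reals.
Open Scope R_scope.

Record Group := {
  carrier :> Type;
  gmul : carrier -> carrier -> carrier;
  ginv : carrier -> carrier;
  gone : carrier;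
  gmulA : forall x y z, gmul x (gmul y z) = gmul (gmul x y) z;
  gmul1l : forall x, gmul gone x = x;
  gmulVl : forall x, gmul (ginv x) x = gone
}.

Arguments gmul {g}.
Arguments ginv {g}.
Arguments gone {g}.

Definition is_subgroup (G : Group) (H : G -> Prop) : Prop :=
  H gone /\ (forall x y, H x -> H y -> H (gmul x y)) /\ (forall x, H x -> H (ginv x)).

Definition is_normal_subgroup (G : Group) (H : G -> Prop) : Prop :=
  is_subgroup G H /\ forall g h, H h -> H (gmul (gmul g h) (ginv g)).

Definition is_hom (G Q : Group) (f : G -> Q) : Prop :=
  forall x y, f (gmul x y) = gmul (f x) (f y).

Definition ltrans {G : Group} (g : G) (A : G -> Prop) : G -> Prop :=
  fun y => exists a, A a /\ y = gmul g a.

Definition rtrans {G : Group} (A : G -> Prop) (g : G) : G -> Prop :=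
  fun y => exists a, A a /\ y = gmul a g.

Definition subset {G : Group} (A B : G -> Prop) : Prop := forall x, A x -> B x.
Definition disjoint {G : Group} (A B : G -> Prop) : Prop := forall x, A x -> B x -> False.
Definition union2 {G : Group} (A B : G -> Prop) : G -> Prop := fun x => A x \/ B x.

Definition amenable_on (G : Group) (S : G -> Prop) : Prop :=
  exists mu : (G -> Prop) -> R,
    mu S = 1 /\
    (forall A, subset A S -> 0 <= mu A) /\
    (forall A B, subset A S -> subset B S -> disjoint A B ->
        mu (union2 A B) = mu A + mu B) /\
    (forall g A, S g -> subset A S -> mu (ltrans g A) = mu A).

Definition amenable (G : Group) : Prop := amenable_on G (fun _ => True).

Definition paradoxical (G : Group) (m n : nat) : Prop :=
  (0 < m)%nat /\ (0 < n)%nat /\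
  exists (P Q : nat -> G -> Prop) (g h : nat -> G),
    (forall i j, (i < m)%nat -> (j < m)%nat -> i <> j -> disjoint (P i) (P j)) /\
    (forall i j, (i < n)%nat -> (j < n)%nat -> i <> j -> disjoint (Q i) (Q j)) /\
    (forall i j, (i < m)%nat -> (j < n)%nat -> disjoint (P i) (Q j)) /\
    (forall x : G, exists i, (i < m)%nat /\ rtrans (P i) (g i) x) /\
    (forall x : G, exists j, (j < n)%nat /\ rtrans (Q j) (h j) x).

Definition is_tarski_number (G : Group) (k : nat) : Prop :=
  (exists m n, paradoxical G m n /\ k = (m + n)%nat) /\
  (forall m n, paradoxical G m n -> (k <= m + n)%nat).

From Stdlib Require Import Reals Lra List Bool Lia Classical ClassicalEpsilon FinFun
  FunctionalExtensionality PropExtensionality Wf_nat.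
From mathcomp Require classical_sets.
Import ListNotations.
Local Open Scope nat_scope.

(* Pieces of a paradoxical decomposition of G/H pull back along pi to one of G with the
   same numbers of pieces.  Conversely, given pieces P_i, P'_j of G with translators
   g_i, g'_j, join each y in G/H (in two colours) to the points y pi(g_i)^-1, resp.
   y pi(g'_j)^-1.  A matching choosing one neighbour per vertex, injectively, is exactly
   a paradoxical decomposition of G/H with the same m and n.  Since every vertex has
   finite degree, such a matching exists by Hall's theorem (via Zorn's lemma) once
   |F| <= |N(F)| for finite F, and this is checked with the invariant mean of H: each
   fibre has mass 1, split among the edges of its vertex by the first piece covering a
   point, and translated to the fibres of the neighbours these portions are disjoint. *)

Definition enum {A : Type} (P : A -> Prop) (l : list A) : Prop :=
  NoDup l /\ forall x, In x l <-> P x.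

Section Enumerations.
Context {A : Type}.
Implicit Types (P : A -> Prop) (l : list A).

Lemma enum_of_incl l : forall P, (forall x, P x -> In x l) -> exists L, enum P L.
Proof.
  induction l as [|a l IH]; intros P HP.
  - exists []. split; [constructor|]. intros x; split; [intros []|intros Px; exact (HP x Px)].
  - destruct (IH (fun x => P x /\ x <> a)) as [L [ND HL]].
    { intros x [Px Hx]. destruct (HP x Px) as [->|H]; [congruence|exact H]. }
    destruct (classic (P a)) as [Pa|nPa].
    + exists (a :: L). split.
      * constructor; [|exact ND]. intros Hin. apply HL in Hin. tauto.
      * intros x; split.
        -- intros [<-|Hx]; [exact Pa|apply HL in Hx; tauto].
        -- intros Px. destruct (classic (x = a)) as [->|ne]; [left; reflexivity|].
           right; apply HL; tauto.
    + exists L. split; [exact ND|]. intros x; split.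
      * intros Hx; apply HL in Hx; tauto.
      * intros Px; apply HL; split; [exact Px|]. intros ->; tauto.
Qed.

Lemma enum_eqv P P' l : enum P l -> (forall x, P x <-> P' x) -> enum P' l.
Proof. intros [N H] H'; split; [exact N|]; intros x; rewrite H; apply H'. Qed.

Lemma enum_nil P : (forall x, ~ P x) -> enum P [].
Proof. intros H; split; [constructor|]; intros x; split; [intros []|intros p; exact (H x p)]. Qed.

Lemma enum_single P a : (forall x, P x <-> x = a) -> enum P [a].
Proof.
  intros H; split; [constructor; [intros []|constructor]|].
  intros x; rewrite H; simpl; split; [intros [->|[]]; reflexivity|intros ->; left; reflexivity].
Qed.

Lemma enum_length_le P1 P2 l1 l2 :
  enum P1 l1 -> enum P2 l2 -> (forall x, P1 x -> P2 x) -> length l1 <= length l2.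
Proof.
  intros [N1 H1] [N2 H2] Hs. apply NoDup_incl_length; [exact N1|].
  intros x Hx. apply H2, Hs, H1, Hx.
Qed.

Lemma enum_length_eq P1 P2 l1 l2 :
  enum P1 l1 -> enum P2 l2 -> (forall x, P1 x <-> P2 x) -> length l1 = length l2.
Proof.
  intros E1 E2 H. apply Nat.le_antisymm.
  - apply (enum_length_le P1 P2); auto; intros; apply H; auto.
  - apply (enum_length_le P2 P1); auto; intros; apply H; auto.
Qed.

Definition bool_of (P : Prop) : bool := if excluded_middle_informative P then true else false.

Lemma bool_of_true (P : Prop) : bool_of P = true <-> P.
Proof. unfold bool_of; destruct (excluded_middle_informative P); split; intros; congruence || tauto. Qed.

Lemma bool_of_false (P : Prop) : bool_of P = false <-> ~ P.
Proof. unfold bool_of; destruct (excluded_middle_informative P); split; intros; congruence || tauto. Qed.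

Lemma enum_length_union_inter P1 P2 l1 l2 lu li :
  enum P1 l1 -> enum P2 l2 -> enum (fun x => P1 x \/ P2 x) lu ->
  enum (fun x => P1 x /\ P2 x) li -> length lu + length li = length l1 + length l2.
Proof.
  intros [N1 H1] [N2 H2] Eu Ei.
  set (in2 := fun x => bool_of (P2 x)).
  assert (Ein : enum (fun x => P1 x /\ P2 x) (filter in2 l1)).
  { split; [apply NoDup_filter; exact N1|]. intros x.
    rewrite filter_In, H1. unfold in2; rewrite bool_of_true. tauto. }
  assert (Eout : enum (fun x => P1 x \/ P2 x) (l2 ++ filter (fun x => negb (in2 x)) l1)).
  { split.
    - apply NoDup_app; [exact N2|apply NoDup_filter; exact N1|].
      intros a Ha Hb. apply filter_In in Hb. destruct Hb as [_ Hb].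
      apply negb_true_iff, bool_of_false in Hb. apply Hb, H2, Ha.
    - intros x. rewrite in_app_iff, filter_In, H1, H2, negb_true_iff.
      unfold in2; rewrite bool_of_false. destruct (classic (P2 x)); tauto. }
  rewrite (enum_length_eq _ _ _ _ Eu Eout (fun x => iff_refl _)).
  rewrite (enum_length_eq _ _ _ _ Ei Ein (fun x => iff_refl _)).
  assert (Hsplit : forall l, length l = length (filter in2 l) + length (filter (fun x => negb (in2 x)) l)).
  { induction l as [|a l IH]; simpl; [reflexivity|]. destruct (in2 a); simpl; lia. }
  rewrite length_app, (Hsplit l1). lia.
Qed.

Lemma enum_length_remove P v l l' :
  enum P l -> P v -> enum (fun x => P x /\ x <> v) l' -> length l = S (length l').
Proof.
  intros E Pv E'.
  assert (Hs : enum (fun x => x = v) [v]) by (apply enum_single; tauto).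
  assert (He : enum (fun x => (P x /\ x <> v) /\ x = v) []) by (apply enum_nil; tauto).
  assert (E2 : enum (fun x => (P x /\ x <> v) \/ x = v) l).
  { apply (enum_eqv _ _ _ E). intros x. split.
    - intros Px. destruct (classic (x = v)); tauto.
    - intros [[? ?]| ->]; assumption. }
  pose proof (enum_length_union_inter _ _ _ _ _ _ E' Hs E2 He). simpl in *. lia.
Qed.

End Enumerations.

Lemma chain_finite_subset {T : Type} (C : (T -> Prop) -> Prop) (l : list T) :
  (forall D1 D2, C D1 -> C D2 -> (forall p, D1 p -> D2 p) \/ (forall p, D2 p -> D1 p)) ->
  (forall p, In p l -> exists D, C D /\ D p) ->
  (forall p, ~ In p l) \/ exists D, C D /\ forall p, In p l -> D p.
Proof.
  intros Ctot. induction l as [|p l IH]; intros Hl; [left; intros p []|right].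
  destruct (Hl p (or_introl eq_refl)) as [Dp [CDp Dpp]].
  destruct IH as [Hnil|[D [CD HD]]]; [intros q hq; apply Hl; right; exact hq| |].
  - exists Dp; split; [exact CDp|]. intros q [<-|hq]; [exact Dpp|destruct (Hnil q hq)].
  - destruct (Ctot D Dp CD CDp) as [h|h].
    + exists Dp; split; [exact CDp|]. intros q [<-|hq]; auto.
    + exists D; split; [exact CD|]. intros q [<-|hq]; auto.
Qed.

Definition edge_list {V : Type} (deg : V -> nat) (l : list V) : list (V * nat) :=
  flat_map (fun w => map (pair w) (seq 0 (deg w))) l.

Lemma in_edge_list {V : Type} (deg : V -> nat) l e :
  In e (edge_list deg l) <-> In (fst e) l /\ snd e < deg (fst e).
Proof.
  destruct e as [w i]; unfold edge_list; simpl. rewrite in_flat_map. split.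
  - intros [w' [h1 h2]]. apply in_map_iff in h2. destruct h2 as [j [e h]].
    injection e as -> ->. apply in_seq in h. split; auto; lia.
  - intros [h1 h2]. exists w; split; auto. apply in_map, in_seq; lia.
Qed.

Lemma edge_list_NoDup {V : Type} (deg : V -> nat) l : NoDup l -> NoDup (edge_list deg l).
Proof.
  induction l as [|a l IH]; intros nd; simpl; [constructor|].
  inversion nd; subst. apply NoDup_app.
  - apply Injective_map_NoDup; [intros x y e; injection e; auto|apply seq_NoDup].
  - apply IH; auto.
  - intros e h1 h2. apply in_map_iff in h1. destruct h1 as [j [<- _]].
    apply in_edge_list in h2. simpl in h2. tauto.
Qed.

Section HallInfinite.
Context {V X : Type} (deg : V -> nat) (nb : V -> nat -> X).

(* A bipartite graph from V to X in which vertex v has the edges (v, i), i < deg v,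
   ending at nb v i; edge sets T are given as predicates on such pairs. *)
Definition nbhd (T : V -> nat -> Prop) (F : V -> Prop) : X -> Prop :=
  fun x => exists v i, F v /\ i < deg v /\ T v i /\ nb v i = x.

Definition hall (T : V -> nat -> Prop) : Prop :=
  forall F lF lS, enum F lF -> enum (nbhd T F) lS -> length lF <= length lS.

Definition deficient (T : V -> nat -> Prop) (F : V -> Prop) : Prop :=
  exists lF lS, enum F lF /\ enum (nbhd T F) lS /\ length lS < length lF.

Definition drop_edge (T : V -> nat -> Prop) (e : V * nat) : V -> nat -> Prop :=
  fun w i => T w i /\ (w, i) <> e.

Lemma nbhd_finite T F lF : enum F lF -> exists lS, enum (nbhd T F) lS.
Proof.
  intros E. apply (enum_of_incl (flat_map (fun v => map (nb v) (seq 0 (deg v))) lF)).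
  intros x [v [i [Fv [Hi [_ <-]]]]]. apply in_flat_map. exists v; split; [apply E; auto|].
  apply in_map, in_seq; lia.
Qed.

Lemma hall_ext T T' : (forall v i, i < deg v -> (T v i <-> T' v i)) -> hall T -> hall T'.
Proof.
  intros HT H F lF lS EF ES. apply (H F lF lS EF).
  apply (enum_eqv _ _ _ ES). intros x; split; intros [v [i [p [q [r s]]]]];
    exists v, i; repeat split; auto; apply HT; auto.
Qed.

Lemma not_hall T : ~ hall T -> exists F, deficient T F.
Proof.
  intros nH. apply NNPP; intros C. apply nH. intros F lF lS EF ES.
  destruct (Nat.le_gt_cases (length lF) (length lS)) as [h|h]; [exact h|].
  exfalso; apply C; exists F, lF, lS; auto.
Qed.

Lemma deficient_drop_edge T F v a : hall T -> deficient (drop_edge T (v, a)) F -> F v.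
Proof.
  intros HT [lF [lS [EF [ES hlt]]]]. apply NNPP; intros nv.
  enough (length lF <= length lS) by lia.
  apply (HT F lF lS EF), (enum_eqv _ _ _ ES).
  intros x; split; intros [w [i [p [q [r s]]]]]; exists w, i; repeat split; auto.
  - apply r.
  - intros e; injection e as -> ->; tauto.
Qed.

Lemma nbhd_union_drop_edges T F1 F2 v a b : a <> b -> F1 v -> F2 v ->
  forall x, nbhd T (fun w => F1 w \/ F2 w) x ->
    nbhd (drop_edge T (v, a)) F1 x \/ nbhd (drop_edge T (v, b)) F2 x.
Proof.
  intros ab v1 v2 x [w [i [[p|p] [q [r <-]]]]].
  - destruct (classic ((w, i) = (v, a))) as [e|e].
    + injection e as -> ->. right. exists v, a; repeat split; auto.
      intros e; injection e; congruence.
    + left. exists w, i; repeat split; auto.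
  - destruct (classic ((w, i) = (v, b))) as [e|e].
    + injection e as -> ->. left. exists v, b; repeat split; auto.
      intros e; injection e; congruence.
    + right. exists w, i; repeat split; auto.
Qed.

Lemma nbhd_inter_drop_edges T F1 F2 v a b :
  forall x, nbhd T (fun w => (F1 w /\ F2 w) /\ w <> v) x ->
    nbhd (drop_edge T (v, a)) F1 x /\ nbhd (drop_edge T (v, b)) F2 x.
Proof.
  intros x [w [i [[[p1 p2] nv] [q [r <-]]]]].
  split; exists w, i; repeat split; auto; intros e; injection e; congruence.
Qed.

(* Two deficient sets for the removals of two distinct edges at v would, by
   submodularity of |F| - |N(F)|, produce a deficient set for T itself. *)
Lemma critical_edge_unique T v a b F1 F2 : hall T ->
  deficient (drop_edge T (v, a)) F1 -> deficient (drop_edge T (v, b)) F2 -> a = b.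
Proof.
  intros HT D1 D2. apply NNPP; intros ab.
  pose proof (deficient_drop_edge _ _ _ _ HT D1) as v1.
  pose proof (deficient_drop_edge _ _ _ _ HT D2) as v2.
  destruct D1 as [lF1 [lS1 [E1 [S1 l1]]]], D2 as [lF2 [lS2 [E2 [S2 l2]]]].
  destruct (enum_of_incl (lF1 ++ lF2) (fun w => F1 w \/ F2 w)) as [lU EU].
  { intros w [h|h]; apply in_app_iff; [left; apply E1|right; apply E2]; auto. }
  destruct (enum_of_incl lF1 (fun w => F1 w /\ F2 w)) as [lI EI].
  { intros w [h _]; apply E1; auto. }
  destruct (enum_of_incl lF1 (fun w => (F1 w /\ F2 w) /\ w <> v)) as [lIv EIv].
  { intros w [[h _] _]; apply E1; auto. }
  destruct (enum_of_incl (lS1 ++ lS2)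
    (fun x => nbhd (drop_edge T (v, a)) F1 x \/ nbhd (drop_edge T (v, b)) F2 x)) as [lSU ESU].
  { intros x [h|h]; apply in_app_iff; [left; apply S1|right; apply S2]; auto. }
  destruct (enum_of_incl lS1
    (fun x => nbhd (drop_edge T (v, a)) F1 x /\ nbhd (drop_edge T (v, b)) F2 x)) as [lSI ESI].
  { intros x [h _]; apply S1; auto. }
  destruct (nbhd_finite T _ lU EU) as [lNU ENU].
  destruct (nbhd_finite T _ lIv EIv) as [lNI ENI].
  pose proof (enum_length_union_inter _ _ _ _ _ _ S1 S2 ESU ESI).
  pose proof (enum_length_union_inter _ _ _ _ _ _ E1 E2 EU EI).
  pose proof (enum_length_remove _ v lI lIv EI (conj v1 v2) EIv).
  pose proof (HT _ _ _ EU ENU). pose proof (HT _ _ _ EIv ENI).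
  pose proof (enum_length_le _ _ _ _ ENU ESU (nbhd_union_drop_edges T F1 F2 v a b ab v1 v2)).
  pose proof (enum_length_le _ _ _ _ ENI ESI (nbhd_inter_drop_edges T F1 F2 v a b)).
  lia.
Qed.

Definition kept (D : V * nat -> Prop) : V -> nat -> Prop := fun v i => ~ D (v, i).

(* Zorn's lemma on sets of deleted edges preserving Hall's condition, which has finite
   character because only finitely many edges leave a finite F. *)
Lemma hall_maximal_exists : hall (fun _ _ => True) ->
  exists D, hall (kept D) /\
    forall D', (forall p, D p -> D' p) -> (exists p, D' p /\ ~ D p) -> ~ hall (kept D').
Proof.
  intros Hall0.
  destruct (@classical_sets.Zorn_bigcup _ (fun D => hall (kept D))) as [D [HD Dmax]].
  - intros C HC Ctot F lF lS EF ES.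
    destruct (enum_of_incl (edge_list deg lF)
       (fun p => F (fst p) /\ snd p < deg (fst p) /\ exists D, C D /\ D p)) as [lp Ep].
    { intros p [h1 [h2 _]]. apply in_edge_list. split; [apply EF|]; auto. }
    assert (HD0 : exists D0, hall (kept D0) /\ (forall p, D0 p -> exists D, C D /\ D p) /\
                             forall p, In p lp -> D0 p).
    { destruct (chain_finite_subset C lp Ctot) as [Hnil|[D0 [CD0 HD0]]].
      - intros p hp; apply Ep in hp; tauto.
      - exists (fun _ => False); repeat split; try tauto.
        apply (hall_ext (fun _ _ => True)); [unfold kept; tauto|exact Hall0].
      - exists D0; repeat split; eauto. }
    destruct HD0 as [D0 [HD0 [D0C lpD0]]].
    apply (HD0 F lF lS EF), (enum_eqv _ _ _ ES).
    intros x; split; intros [v [i [Fv [hi [r s]]]]]; exists v, i; repeat split; auto.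
    + intros h; apply r. destruct (D0C _ h) as [D' [CD' hD']]. exists D'; assumption.
    + intros [D' CD' hD']. apply r, lpD0, Ep; simpl; eauto.
  - exists D. split; [exact HD|]. intros D' sub [p [p1 p2]] HD'.
    apply (Dmax D'); [|exact HD'].
    split; [exact sub|]. intros h; apply p2, h, p1.
Qed.

Section MaximalDeletion.
Variable D : V * nat -> Prop.
Hypothesis hall_D : hall (kept D).
Hypothesis D_maximal :
  forall D', (forall p, D p -> D' p) -> (exists p, D' p /\ ~ D p) -> ~ hall (kept D').

Lemma maximal_kept_edge_exists v : exists i, i < deg v /\ ~ D (v, i).
Proof.
  apply NNPP; intros C.
  assert (E1 : enum (fun w => w = v) [v]) by (apply enum_single; tauto).
  assert (E2 : enum (nbhd (kept D) (fun w => w = v)) []).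
  { apply enum_nil. intros x [w [i [-> [q [r _]]]]]. apply C; eauto. }
  pose proof (hall_D _ _ _ E1 E2). simpl in *; lia.
Qed.

Lemma maximal_kept_edge_unique v a b :
  a < deg v -> ~ D (v, a) -> b < deg v -> ~ D (v, b) -> a = b.
Proof.
  assert (Hcrit : forall c, c < deg v -> ~ D (v, c) ->
                  exists F, deficient (drop_edge (kept D) (v, c)) F).
  { intros c hc Dc. apply not_hall. intros Hdrop.
    apply (D_maximal (fun p => D p \/ p = (v, c))).
    - intros p hp; left; exact hp.
    - exists (v, c); split; [right; reflexivity|exact Dc].
    - revert Hdrop; apply hall_ext. intros w i _. unfold drop_edge, kept. tauto. }
  intros ha Da hb Db.
  destruct (Hcrit a ha Da) as [F1 D1], (Hcrit b hb Db) as [F2 D2].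
  exact (critical_edge_unique _ _ _ _ _ _ hall_D D1 D2).
Qed.

End MaximalDeletion.

Theorem hall_matching : hall (fun _ _ => True) ->
  exists f : V -> nat, (forall v, f v < deg v) /\
    forall u v, nb u (f u) = nb v (f v) -> u = v.
Proof.
  intros Hall0.
  destruct (hall_maximal_exists Hall0) as [D [HD Dmax]].
  destruct (choice (fun v i => i < deg v /\ ~ D (v, i)) (maximal_kept_edge_exists D HD))
    as [f hf].
  exists f. split; [intros v; apply hf|]. intros u v Heq. apply NNPP; intros uv.
  assert (E1 : enum (fun w => w = u \/ w = v) [u; v]).
  { split.
    - constructor; [simpl; intros [h|[]]; congruence|constructor; [intros []|constructor]].
    - intros x; simpl; split; [intros [h|[h|[]]]; auto|intros [h|h]; auto]. }
  assert (E2 : enum (nbhd (kept D) (fun w => w = u \/ w = v)) [nb u (f u)]).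
  { apply enum_single. intros x; split.
    - intros [w [i [[->| ->] [q [r <-]]]]]; [|rewrite Heq];
        f_equal; eapply (maximal_kept_edge_unique D HD Dmax); try apply hf; eauto.
    - intros ->. exists u, (f u). repeat split; auto; apply hf. }
  pose proof (HD _ _ _ E1 E2). simpl in *; lia.
Qed.

End HallInfinite.

Section GroupLemmas.
Context {G : Group}.
Implicit Types x y z : G.

Lemma mulgA x y z : gmul x (gmul y z) = gmul (gmul x y) z. Proof. apply gmulA. Qed.
Lemma mul1g x : gmul gone x = x. Proof. apply gmul1l. Qed.
Lemma mulVg x : gmul (ginv x) x = gone. Proof. apply gmulVl. Qed.

Lemma mulKg x y : gmul (ginv x) (gmul x y) = y.
Proof. rewrite mulgA, mulVg, mul1g; reflexivity. Qed.

Lemma mulgV x : gmul x (ginv x) = gone.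
Proof.
  rewrite <- (mul1g (gmul x (ginv x))).
  rewrite <- (mulVg (ginv x)) at 1.
  rewrite <- mulgA, (mulgA (ginv x)), mulVg, mul1g, mulVg; reflexivity.
Qed.

Lemma mulg1 x : gmul x gone = x.
Proof. rewrite <- (mulVg x), mulgA, mulgV, mul1g; reflexivity. Qed.

Lemma mulKVg x y : gmul x (gmul (ginv x) y) = y.
Proof. rewrite mulgA, mulgV, mul1g; reflexivity. Qed.

Lemma mulgK x y : gmul (gmul y x) (ginv x) = y.
Proof. rewrite <- mulgA, mulgV, mulg1; reflexivity. Qed.

Lemma mulgKV x y : gmul (gmul y (ginv x)) x = y.
Proof. rewrite <- mulgA, mulVg, mulg1; reflexivity. Qed.

Lemma invg_unique x y : gmul x y = gone -> y = ginv x.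
Proof. intros h. rewrite <- (mulKg x y), h, mulg1; reflexivity. Qed.

Lemma invgK x : ginv (ginv x) = x.
Proof. symmetry; apply invg_unique, mulVg. Qed.

Lemma invMg x y : ginv (gmul x y) = gmul (ginv y) (ginv x).
Proof.
  symmetry; apply invg_unique.
  rewrite mulgA, <- (mulgA x y), mulgV, mulg1, mulgV; reflexivity.
Qed.

Lemma invg1 : ginv (@gone G) = gone.
Proof. symmetry; apply invg_unique, mul1g. Qed.

Lemma mulIg x y z : gmul y x = gmul z x -> y = z.
Proof. intros h. rewrite <- (mulgK x y), h, mulgK; reflexivity. Qed.

End GroupLemmas.

Section Morphisms.
Context {G Q : Group} (pi : G -> Q) (hpi : is_hom G Q pi).

Lemma morph1 : pi gone = gone.
Proof. apply (mulIg (pi gone)). rewrite <- hpi, !mul1g; reflexivity. Qed.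

Lemma morphV x : pi (ginv x) = ginv (pi x).
Proof. apply invg_unique. rewrite <- hpi, mulgV, morph1; reflexivity. Qed.

End Morphisms.

Definition sumR {A : Type} (l : list A) (f : A -> R) : R :=
  fold_right (fun a r => (f a + r)%R) 0%R l.

Section FiniteSums.
Context {A : Type}.
Implicit Types (l : list A) (f : A -> R).

Lemma sumR_ext l f f' : (forall x, In x l -> f x = f' x) -> sumR l f = sumR l f'.
Proof. induction l; simpl; intros h; [reflexivity|]. rewrite h, IHl; auto. Qed.

Lemma sumR_le l f f' : (forall x, In x l -> (f x <= f' x)%R) -> (sumR l f <= sumR l f')%R.
Proof.
  induction l as [|a l IH]; simpl; intros h; [lra|].
  pose proof (h a (or_introl eq_refl)). pose proof (IH (fun x hx => h x (or_intror hx))). lra.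
Qed.

Lemma sumR_1 l : sumR l (fun _ => 1%R) = INR (length l).
Proof. induction l; simpl; [reflexivity|]. rewrite IHl. destruct (length l); simpl; lra. Qed.

Lemma sumR_0 l : sumR l (fun _ => 0%R) = 0%R.
Proof. induction l; simpl; [reflexivity|]. rewrite IHl; lra. Qed.

Lemma sumRD l f f' : sumR l (fun x => f x + f' x)%R = (sumR l f + sumR l f')%R.
Proof. induction l; simpl; [lra|]. rewrite IHl; lra. Qed.

Lemma sumR_app l1 l2 f : sumR (l1 ++ l2) f = (sumR l1 f + sumR l2 f)%R.
Proof. induction l1; simpl; [lra|]. rewrite IHl1; lra. Qed.

Lemma sumR_single l f z0 :
  NoDup l -> In z0 l -> (forall z, In z l -> z <> z0 -> f z = 0%R) -> sumR l f = f z0.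
Proof.
  induction l as [|a l IH]; intros nd hin h; [destruct hin|].
  inversion nd; subst. simpl. destruct hin as [<-|hin].
  - rewrite (sumR_ext l f (fun _ => 0%R)), sumR_0; [lra|].
    intros x hx; apply h; [right; exact hx|]. intros ->; contradiction.
  - rewrite IH, (h a); auto; [lra|left; reflexivity|intros ->; contradiction|].
    intros z hz; apply h; right; exact hz.
Qed.

End FiniteSums.

Lemma sumR_swap {A B : Type} (la : list A) (lb : list B) f :
  sumR la (fun a => sumR lb (fun b => f a b)) = sumR lb (fun b => sumR la (fun a => f a b)).
Proof.
  induction la; simpl.
  - rewrite sumR_0; reflexivity.
  - rewrite IHla, <- sumRD; reflexivity.
Qed.

Lemma sumR_map {A B : Type} (h : A -> B) l f : sumR (map h l) f = sumR l (fun x => f (h x)).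
Proof. induction l; simpl; [reflexivity|]. rewrite IHl; reflexivity. Qed.

Lemma sumR_flat_map {A B : Type} (h : A -> list B) l f :
  sumR (flat_map h l) f = sumR l (fun x => sumR (h x) f).
Proof. induction l; simpl; [reflexivity|]. rewrite sumR_app, IHl; reflexivity. Qed.

Lemma pred_ext {A : Type} (P P' : A -> Prop) : (forall x, P x <-> P' x) -> P = P'.
Proof.
  intros h; apply functional_extensionality; intros x; apply propositional_extensionality, h.
Qed.

Section AmenableKernel.
Context {G Q : Group} (pi : G -> Q) (H : G -> Prop) (s : Q -> G) (mu : (G -> Prop) -> R).
Hypothesis hpi : is_hom G Q pi.
Hypothesis hker : forall g, pi g = gone <-> H g.
Hypothesis hs : forall q, pi (s q) = q.
Hypothesis mu_H : mu H = 1%R.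
Hypothesis mu_ge0 : forall A, subset A H -> (0 <= mu A)%R.
Hypothesis mu_union2 : forall A B, subset A H -> subset B H -> disjoint A B ->
  mu (union2 A B) = (mu A + mu B)%R.
Hypothesis mu_ltrans : forall g A, H g -> subset A H -> mu (ltrans g A) = mu A.

Definition fibre (y : Q) : G -> Prop := fun x => pi x = y.

(* Inverting k turns the left invariance of mu into the right invariance of
   fmean (fmean_rtrans). *)
Definition fmean (y : Q) (A : G -> Prop) : R := mu (fun k => A (gmul (ginv k) (s y))).

Lemma in_fibre_shift y k : fibre y (gmul (ginv k) (s y)) <-> H k.
Proof.
  unfold fibre. rewrite hpi, (morphV pi hpi), hs, <- hker. split.
  - intros h. rewrite <- (invgK (pi k)), (mulIg _ _ _ (eq_trans h (eq_sym (mul1g y)))), invg1.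
    reflexivity.
  - intros ->. rewrite invg1, mul1g; reflexivity.
Qed.

Lemma fmean_ext y A B : (forall x, A x <-> B x) -> fmean y A = fmean y B.
Proof. intros h; unfold fmean. f_equal. apply pred_ext; intros; apply h. Qed.

Lemma fmean_union2 y A B : subset A (fibre y) -> subset B (fibre y) -> disjoint A B ->
  fmean y (union2 A B) = (fmean y A + fmean y B)%R.
Proof.
  intros hA hB hAB. apply mu_union2; try (intros k hk; apply (in_fibre_shift y); auto).
  intros k; apply hAB.
Qed.

Lemma fmean_ge0 y A : subset A (fibre y) -> (0 <= fmean y A)%R.
Proof. intros hA; apply mu_ge0; intros k hk; apply (in_fibre_shift y); auto. Qed.

Lemma fmean_fibre y : fmean y (fibre y) = 1%R.
Proof. unfold fmean. rewrite <- mu_H. f_equal. apply pred_ext, in_fibre_shift. Qed.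

Lemma fmean_le1 y A : subset A (fibre y) -> (fmean y A <= 1)%R.
Proof.
  intros hA. rewrite <- (fmean_fibre y).
  rewrite (fmean_ext y (fibre y) (union2 A (fun x => fibre y x /\ ~ A x))).
  - rewrite fmean_union2; [| exact hA | intros x [p _]; exact p | intros x p [_ q]; contradiction].
    enough (0 <= fmean y (fun x => fibre y x /\ ~ A x))%R by lra.
    apply fmean_ge0; intros x [p _]; exact p.
  - intros x; unfold union2; split.
    + intros p; destruct (classic (A x)); auto.
    + intros [p|[p _]]; auto.
Qed.

Lemma fmean_empty y A : (forall x, ~ A x) -> fmean y A = 0%R.
Proof.
  intros hA.
  assert (e : fmean y A = fmean y (union2 A A)) by (apply fmean_ext; unfold union2; tauto).
  rewrite fmean_union2 in e; try (intros x p; destruct (hA x p)).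
  lra.
Qed.

Lemma fmean_rtrans y A c : subset A (fibre y) ->
  fmean (gmul y (ginv (pi c))) (fun u => A (gmul u c)) = fmean y A.
Proof.
  intros hA. unfold fmean.
  set (z := gmul y (ginv (pi c))).
  set (t := gmul (gmul (s z) c) (ginv (s y))).
  assert (Ht : H t).
  { apply hker. unfold t, z. rewrite !hpi, (morphV pi hpi), !hs, mulgKV, mulgV; reflexivity. }
  rewrite <- (mu_ltrans t (fun k => A (gmul (ginv k) (s y))) Ht);
    [|intros k hk; apply (in_fibre_shift y); auto].
  f_equal. apply pred_ext. intros w. unfold ltrans. split.
  - intros hw. exists (gmul (ginv t) w). split.
    + rewrite invMg, invgK. unfold t. rewrite <- mulgA, mulgKV, mulgA; exact hw.
    + rewrite mulKVg; reflexivity.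
  - intros [a [ha ->]].
    replace (gmul (gmul (ginv (gmul t a)) (s z)) c) with (gmul (ginv a) (s y)); [exact ha|].
    unfold t. rewrite !invMg, !invgK, !mulgA, !mulgKV; reflexivity.
Qed.

Lemma fmean_disjoint_union {K : Type} y (ks : list K) (A : K -> G -> Prop) :
  NoDup ks -> (forall k, In k ks -> subset (A k) (fibre y)) ->
  (forall k k', In k ks -> In k' ks -> k <> k' -> disjoint (A k) (A k')) ->
  fmean y (fun x => exists k, In k ks /\ A k x) = sumR ks (fun k => fmean y (A k)).
Proof.
  induction ks as [|k ks IH]; intros nd hsub hdisj; simpl.
  - apply fmean_empty. intros x [k [[] _]].
  - inversion nd; subst.
    rewrite <- IH; auto.
    + rewrite <- fmean_union2.
      * apply fmean_ext. intros x; unfold union2; split.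
        -- intros [k' [[<-|h1] h2]]; [left; exact h2|right; exists k'; auto].
        -- intros [h|[k' [h1 h2]]]; [exists k; auto|exists k'; auto].
      * apply hsub; left; reflexivity.
      * intros x [k' [h1 h2]]. apply (hsub k'); [right; exact h1|exact h2].
      * intros x h1 [k' [h2 h3]]. refine (hdisj k k' (or_introl eq_refl) (or_intror h2) _ x h1 h3).
        intros ->; contradiction.
    + intros k' h; apply hsub; right; exact h.
    + intros k1 k2 h1 h2; apply hdisj; right; auto.
Qed.

Section ParadoxicalDecomposition.
Variables (m n : nat) (PA PB : nat -> G -> Prop) (ga gb : nat -> G).
Hypothesis PA_disj : forall i j, i < m -> j < m -> i <> j -> disjoint (PA i) (PA j).
Hypothesis PB_disj : forall i j, i < n -> j < n -> i <> j -> disjoint (PB i) (PB j).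
Hypothesis PAB_disj : forall i j, i < m -> j < n -> disjoint (PA i) (PB j).
Hypothesis PA_cover : forall x : G, exists i, i < m /\ rtrans (PA i) (ga i) x.
Hypothesis PB_cover : forall x : G, exists j, j < n /\ rtrans (PB j) (gb j) x.

Definition side_size (b : bool) : nat := if b then n else m.
Definition piece (b : bool) (i : nat) : G -> Prop := if b then PB i else PA i.
Definition translator (b : bool) (i : nat) : G := if b then gb i else ga i.

Definition covers (b : bool) (i : nat) (x : G) : Prop :=
  piece b i (gmul x (ginv (translator b i))).

Definition paradox_deg (v : Q * bool) : nat := side_size (snd v).
Definition paradox_nb (v : Q * bool) (i : nat) : Q :=
  gmul (fst v) (ginv (pi (translator (snd v) i))).

Lemma piece_disjoint b i b' i' : i < side_size b -> i' < side_size b' -> (b, i) <> (b', i') ->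
  disjoint (piece b i) (piece b' i').
Proof.
  destruct b, b'; unfold side_size, piece; simpl; intros h1 h2 ne.
  - apply PB_disj; auto; intros e; subst; apply ne; reflexivity.
  - intros x p q. exact (PAB_disj i' i h2 h1 x q p).
  - apply PAB_disj; auto.
  - apply PA_disj; auto; intros e; subst; apply ne; reflexivity.
Qed.

Lemma covers_exists b x : exists i, i < side_size b /\ covers b i x.
Proof.
  unfold covers; destruct b; unfold side_size, translator, piece; simpl.
  - destruct (PB_cover x) as [j [hj [a [ha ->]]]]. exists j; split; auto. rewrite mulgK; exact ha.
  - destruct (PA_cover x) as [j [hj [a [ha ->]]]]. exists j; split; auto. rewrite mulgK; exact ha.
Qed.

Definition first_cover (v : Q * bool) (i : nat) : G -> Prop := fun x =>
  pi x = fst v /\ covers (snd v) i x /\ forall k, covers (snd v) k x -> i <= k.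

Lemma first_cover_mass v :
  sumR (seq 0 (paradox_deg v)) (fun i => fmean (fst v) (first_cover v i)) = 1%R.
Proof.
  rewrite <- fmean_disjoint_union.
  - rewrite <- (fmean_fibre (fst v)). apply fmean_ext. intros x; split.
    + intros [i [_ [p _]]]; exact p.
    + intros hx.
      destruct (dec_inh_nat_subset_has_unique_least_element (fun i => covers (snd v) i x))
        as [i [[hi hmin] _]]; [intros i; apply classic| |].
      { destruct (covers_exists (snd v) x) as [i [_ p]]; eauto. }
      destruct (covers_exists (snd v) x) as [j [hj pj]].
      exists i. split; [|split; [exact hx|split; auto]].
      apply in_seq. unfold paradox_deg. specialize (hmin j pj). lia.
  - apply seq_NoDup.
  - intros i _ x [p _]; exact p.
  - intros i i' _ _ ne x [_ [p1 q1]] [_ [p2 q2]].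
    specialize (q1 i' p2). specialize (q2 i p1). lia.
Qed.

Definition shifted_cover (e : (Q * bool) * nat) : G -> Prop :=
  fun u => first_cover (fst e) (snd e) (gmul u (translator (snd (fst e)) (snd e))).

Lemma shifted_cover_fibre e : subset (shifted_cover e) (fibre (paradox_nb (fst e) (snd e))).
Proof.
  intros u [hu _]. unfold fibre, paradox_nb. rewrite <- hu, hpi, mulgK. reflexivity.
Qed.

Lemma shifted_cover_disjoint e e' :
  snd e < paradox_deg (fst e) -> snd e' < paradox_deg (fst e') -> e <> e' ->
  paradox_nb (fst e) (snd e) = paradox_nb (fst e') (snd e') ->
  disjoint (shifted_cover e) (shifted_cover e').
Proof.
  destruct e as [[y b] i], e' as [[y' b'] i']; unfold paradox_nb, paradox_deg; simpl.
  intros h1 h2 ne hnb u [_ [p1 _]] [_ [p2 _]]. unfold covers in p1, p2; simpl in p1, p2.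
  rewrite mulgK in p1, p2.
  destruct (classic ((b, i) = (b', i'))) as [e|e].
  - injection e as <- <-. apply ne. f_equal. f_equal. exact (mulIg _ _ _ hnb).
  - exact (piece_disjoint b i b' i' h1 h2 e u p1 p2).
Qed.

Lemma paradox_graph_hall : hall paradox_deg paradox_nb (fun _ _ => True).
Proof.
  intros F lF lS EF ES. apply INR_le. rewrite <- !sumR_1.
  set (K := edge_list paradox_deg lF).
  set (nbe := fun e : (Q * bool) * nat => paradox_nb (fst e) (snd e)).
  assert (HK : forall e, In e K -> In (nbe e) lS).
  { intros [v i] he. apply in_edge_list in he. simpl in he. apply ES.
    exists v, i. repeat split; try tauto. apply EF; tauto. }
  assert (mass_edges : sumR lF (fun _ => 1%R) = sumR K (fun e => fmean (nbe e) (shifted_cover e))).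
  { unfold K, edge_list. rewrite sumR_flat_map. apply sumR_ext. intros v _.
    rewrite sumR_map, <- (first_cover_mass v). apply sumR_ext. intros i _.
    symmetry. apply (fmean_rtrans (fst v)). intros x [p _]; exact p. }
  assert (regroup : sumR K (fun e => fmean (nbe e) (shifted_cover e)) =
    sumR lS (fun z => fmean z (fun u => exists e, In e K /\ (nbe e = z /\ shifted_cover e u)))).
  { rewrite (sumR_ext K _ (fun e => sumR lS (fun z => fmean z (fun u => nbe e = z /\ shifted_cover e u)))).
    - rewrite sumR_swap. apply sumR_ext. intros z _. symmetry. apply fmean_disjoint_union.
      + apply edge_list_NoDup, EF.
      + intros e _ u [<- hu]. apply shifted_cover_fibre, hu.
      + intros e e' he he' ne u [ez hu] [ez' hu'].
        apply in_edge_list in he; apply in_edge_list in he'.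
        refine (shifted_cover_disjoint e e' (proj2 he) (proj2 he') ne _ u hu hu').
        unfold nbe in *; congruence.
    - intros e he. rewrite (sumR_single lS _ (nbe e)); [| apply ES | auto |].
      + apply fmean_ext. tauto.
      + intros z _ ne. apply fmean_empty. intros u [e' _]; auto. }
  rewrite mass_edges, regroup. apply sumR_le. intros z _.
  apply fmean_le1. intros u [e [_ [<- hu]]]. apply shifted_cover_fibre, hu.
Qed.

Lemma quotient_decomposition : exists (PA' PB' : nat -> Q -> Prop) (ga' gb' : nat -> Q),
    (forall i j, i < m -> j < m -> i <> j -> disjoint (PA' i) (PA' j)) /\
    (forall i j, i < n -> j < n -> i <> j -> disjoint (PB' i) (PB' j)) /\
    (forall i j, i < m -> j < n -> disjoint (PA' i) (PB' j)) /\
    (forall x : Q, exists i, i < m /\ rtrans (PA' i) (ga' i) x) /\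
    (forall x : Q, exists j, j < n /\ rtrans (PB' j) (gb' j) x).
Proof.
  destruct (hall_matching paradox_deg paradox_nb paradox_graph_hall) as [f [hf finj]].
  set (part := fun b i z => exists y, f (y, b) = i /\ z = paradox_nb (y, b) i).
  assert (part_disj : forall b i b' i', (b, i) <> (b', i') -> disjoint (part b i) (part b' i')).
  { intros b i b' i' ne z [y [<- ->]] [y' [<- e]].
    injection (finj _ _ e) as <- <-. contradiction. }
  assert (part_cover : forall b (x : Q), exists i, i < side_size b /\
            rtrans (part b i) (pi (translator b i)) x).
  { intros b x. exists (f (x, b)). split; [exact (hf (x, b))|].
    exists (paradox_nb (x, b) (f (x, b))). split; [exists x; auto|].
    unfold paradox_nb; simpl. rewrite mulgKV; reflexivity. }
  exists (part false), (part true), (fun i => pi (ga i)), (fun i => pi (gb i)).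
  repeat split.
  - intros i j _ _ ne. apply part_disj. congruence.
  - intros i j _ _ ne. apply part_disj. congruence.
  - intros i j _ _. apply part_disj. congruence.
  - exact (part_cover false).
  - exact (part_cover true).
Qed.

End ParadoxicalDecomposition.

End AmenableKernel.

Lemma paradoxical_pullback (G Q : Group) (pi : G -> Q) (s : Q -> G) m n :
  is_hom G Q pi -> (forall q, pi (s q) = q) -> paradoxical Q m n -> paradoxical G m n.
Proof.
  intros hpi hs [hm [hn [P [P' [g [g' [dP [dP' [dPP' [cP cP']]]]]]]]]].
  assert (pull_cover : forall (A : nat -> Q -> Prop) (t : nat -> Q) k,
    (forall y : Q, exists i, i < k /\ rtrans (A i) (t i) y) ->
    forall x : G, exists i, i < k /\ rtrans (fun x => A i (pi x)) (s (t i)) x).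
  { intros A t k cA x. destruct (cA (pi x)) as [i [hi [a [ha e]]]].
    exists i; split; [exact hi|]. exists (gmul x (ginv (s (t i)))). split.
    - rewrite hpi, (morphV pi hpi), hs, e, mulgK. exact ha.
    - rewrite mulgKV; reflexivity. }
  split; [exact hm|split; [exact hn|]].
  exists (fun i x => P i (pi x)), (fun i x => P' i (pi x)),
         (fun i => s (g i)), (fun i => s (g' i)).
  repeat split; auto.
  - intros i j hi hj ne x; apply (dP i j hi hj ne).
  - intros i j hi hj ne x; apply (dP' i j hi hj ne).
  - intros i j hi hj x; apply (dPP' i j hi hj).
Qed.

Lemma paradoxical_quotient (G Q : Group) (pi : G -> Q) (H : G -> Prop) (s : Q -> G) m n :
  is_hom G Q pi -> (forall g, pi g = gone <-> H g) -> (forall q, pi (s q) = q) ->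
  amenable_on G H -> paradoxical G m n -> paradoxical Q m n.
Proof.
  intros hpi hker hs [mu [mu_H [mu_ge0 [mu_union2 mu_ltrans]]]]
    [hm [hn [P [P' [g [g' [dP [dP' [dPP' [cP cP']]]]]]]]]].
  split; [exact hm|split; [exact hn|]].
  exact (quotient_decomposition pi H s mu hpi hker hs mu_H mu_ge0 mu_union2 mu_ltrans
           m n P P' g g' dP dP' dPP' cP cP').
Qed.

Lemma tarski_number_iff (G1 G2 : Group) k :
  (forall m n, paradoxical G1 m n <-> paradoxical G2 m n) ->
  is_tarski_number G1 k <-> is_tarski_number G2 k.
Proof.
  intros EQ. unfold is_tarski_number.
  split; intros [[m [n [p e]]] hmin]; split.
  - exists m, n; split; [apply EQ|]; assumption.
  - intros m' n' p'; apply hmin, EQ, p'.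
  - exists m, n; split; [apply EQ|]; assumption.
  - intros m' n' p'; apply hmin, EQ, p'.
Qed.

(* Normality of H follows from hker, and non-amenability of G only ensures that
   the Tarski numbers exist. *)
Theorem theorem1 (G Q : Group) (H : G -> Prop) (pi : G -> Q)
  (hHn : is_normal_subgroup G H)
  (hHam : amenable_on G H)
  (hGna : ~ amenable G)
  (hpi : is_hom G Q pi)
  (hsurj : forall q : Q, exists g : G, pi g = q)
  (hker : forall g : G, pi g = gone <-> H g) :
  forall k : nat, is_tarski_number Q k <-> is_tarski_number G k.
Proof.
  destruct (choice (fun q g => pi g = q) hsurj) as [s hs].
  intros k. apply tarski_number_iff. intros m n; split.
  - exact (paradoxical_pullback G Q pi s m n hpi hs).
  - exact (paradoxical_quotient G Q pi H s m n hpi hker hs hHam).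
Qed.
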